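(* Let $A,B$ be tridendriform algebras over a field $\mathbb{K}$, with augmentations $\overline{A}=\mathbb{K}1\oplus A$ and $\overline{B}=\mathbb{K}1\oplus B$. Let $$A\overline{\otimes}B:=(A\otimes B)\oplus(\mathbb{K}1\otimes B)\oplus(A\otimes\mathbb{K}1)\subseteq\overline{A}\otimes\overline{B}.$$ For $\ltimes\in\{\prec,\cdot,\succ\}$ define bilinear products on $A\overline{\otimes}B$ on elements $a\otimes b$, $c\otimes d$ (with $a,c\in\overline A$, $b,d\in\overline B$, each of $a\otimes b$, $c\otimes d$ lying in one of the three summands) by: - if $b=d=1$ (so that $a,c\in A$): $(a\otimes 1)\ltimes(c\otimes 1)=(a\ltimes c)\otimes 1$; - otherwise: $(a\otimes b)\ltimes(c\otimes d)=(a*c)\otimes(b\ltimes d)$, computed with the augmented conventions in $\overline{A}$ and $\overline{B}$. Then $(A\overline{\otimes}B,\prec,\cdot,\succ)$ is a tridendriform algebra.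
   Context: A tridendriform algebra over $\mathbb{K}$ is a vector space $A$ with three bilinear products $\prec,\cdot,\succ$ such that, writing $a*b=a\prec b+a\cdot b+a\succ b$, for all $a,b,c\in A$: $(a\prec b)\prec c=a\prec(b*c)$, $(a\succ b)\prec c=a\succ(b\prec c)$, $(a*b)\succ c=a\succ(b\succ c)$, $(a\succ b)\cdot c=a\succ(b\cdot c)$, $(a\prec b)\cdot c=a\cdot(b\succ c)$, $(a\cdot b)\prec c=a\cdot(b\prec c)$, $(a\cdot b)\cdot c=a\cdot(b\cdot c)$. The augmentation of a tridendriform algebra $A$ is $\overline{A}=\mathbb{K}1\oplus A$, where $1$ is a formally adjoined unit for $*$ ($1*x=x*1=x$ for all $x\in\overline A$), and for all $a\in A$: $1\prec a=0$, $a\prec 1=a$, $1\succ a=a$, $a\succ 1=0$, $1\cdot a=a\cdot 1=0$. The products $1\prec 1$, $1\cdot 1$, $1\succ 1$ are not defined. *)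

From HB Require Import structures.
From mathcomp Require Import all_boot all_order all_algebra.
Set Implicit Arguments. Unset Strict Implicit. Unset Printing Implicit Defensive.
Import GRing.Theory.
Local Open Scope ring_scope.

Definition bilinear_map (K : fieldType) (U V W : lmodType K) (f : U -> V -> W) : Prop :=
  (forall u (k : K) v1 v2, f u (k *: v1 + v2) = k *: f u v1 + f u v2) /\
  (forall v (k : K) u1 u2, f (k *: u1 + u2) v = k *: f u1 v + f u2 v).

Definition tri_star (K : fieldType) (A : lmodType K) (prec dot succ : A -> A -> A)
  (a b : A) : A := prec a b + dot a b + succ a b.

Definition tridendriform (K : fieldType) (A : lmodType K)
  (prec dot succ : A -> A -> A) : Prop :=
  [/\ bilinear_map prec, bilinear_map dot & bilinear_map succ] /\
  let star := tri_star prec dot succ in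
  forall a b c : A,
  prec (prec a b) c = prec a (star b c) /\
  prec (succ a b) c = succ a (prec b c) /\
  succ (star a b) c = succ a (succ b c) /\
  dot (succ a b) c = succ a (dot b c) /\
  dot (prec a b) c = dot a (succ b c) /\
  prec (dot a b) c = dot a (prec b c) /\
  dot (dot a b) c = dot a (dot b c).

Definition is_tensor_product (K : fieldType) (A B T : lmodType K)
  (tens : A -> B -> T) : Prop :=
  bilinear_map tens /\
  forall (W : lmodType K) (f : A -> B -> W), bilinear_map f ->
    exists! g : T -> W,
      (forall (k : K) x y, g (k *: x + y) = k *: g x + g y) /\
      (forall a b, g (tens a b) = f a b).

(* ---------- augmentation  Abar = K1 (+) A, elements are pairs (lambda, a)
   standing for lambda 1 + a ---------- *)
Definition aug (K : fieldType) (A : lmodType K) := (K * A)%type.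

(* a * c in Abar: 1 is a unit for * (1*1 = 1). *)
Definition aug_star (K : fieldType) (A : lmodType K) (prec dot succ : A -> A -> A)
  (x y : aug A) : aug A :=
  (x.1 * y.1, x.1 *: y.2 + y.1 *: x.2 + tri_star prec dot succ x.2 y.2).

(* Bilinear extensions of the augmented conventions
   1 < a = 0, a < 1 = a, 1 > a = a, a > 1 = 0, 1 . a = a . 1 = 0.
   The undefined products 1 < 1, 1 . 1, 1 > 1 are given the junk value 0;
   they are never used below. *)
Definition aug_prec (K : fieldType) (A : lmodType K) (prec : A -> A -> A)
  (x y : aug A) : aug A := (0, prec x.2 y.2 + y.1 *: x.2).
Definition aug_dot (K : fieldType) (A : lmodType K) (dot : A -> A -> A)
  (x y : aug A) : aug A := (0, dot x.2 y.2).
Definition aug_succ (K : fieldType) (A : lmodType K) (succ : A -> A -> A)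
  (x y : aug A) : aug A := (0, succ x.2 y.2 + x.1 *: y.2).

(* ---------- A (x)bar B = (A (x) B) (+) (K1 (x) B) (+) (A (x) K1),
   modelled as T * B * A, with K1 (x) B = B and A (x) K1 = A. ---------- *)
Definition tbar (K : fieldType) (A B T : lmodType K) := (T * B * A)%type.

(* spanning elements a (x) b of the three summands *)
Inductive tgen (A B : Type) :=
  | GenAB of A & B
  | Gen1B of B
  | GenA1 of A.
Arguments GenAB {A B}. Arguments Gen1B {A B}. Arguments GenA1 {A B}.

Definition gen_val (K : fieldType) (A B T : lmodType K) (tens : A -> B -> T)
  (g : tgen A B) : tbar A B T :=
  match g with
  | GenAB a b => (tens a b, 0, 0)
  | Gen1B b => (0, b, 0)
  | GenA1 a => (0, 0, a)
  end.

Definition gen_left (K : fieldType) (A B : lmodType K) (g : tgen A B) : aug A :=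
  match g with GenAB a _ => (0, a) | Gen1B _ => (1, 0) | GenA1 a => (0, a) end.
Definition gen_right (K : fieldType) (A B : lmodType K) (g : tgen A B) : aug B :=
  match g with GenAB _ b => (0, b) | Gen1B b => (0, b) | GenA1 _ => (1, 0) end.

(* x (x) y in Abar (x) Bbar, projected onto A (x)bar B (drops the 1 (x) 1
   component, which is x.1 * y.1; it is zero in every use below). *)
Definition emb (K : fieldType) (A B T : lmodType K) (tens : A -> B -> T)
  (x : aug A) (y : aug B) : tbar A B T :=
  (tens x.2 y.2, x.1 *: y.2, y.1 *: x.2).

(* The defining formula of the product "ltimes" on A (x)bar B, given
   opA = ltimes on A, augopB = ltimes on Bbar (augmented conventions),
   starA = the augmented * on Abar. *)
Definition tbar_op_spec (K : fieldType) (A B T : lmodType K) (tens : A -> B -> T)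
  (opA : A -> A -> A) (starA : aug A -> aug A -> aug A)
  (augopB : aug B -> aug B -> aug B)
  (opX : tbar A B T -> tbar A B T -> tbar A B T) : Prop :=
  forall g h : tgen A B,
    opX (gen_val tens g) (gen_val tens h) =
    match g, h with
    | GenA1 a, GenA1 c => (0, 0, opA a c)
    | _, _ => emb tens (starA (gen_left g) (gen_left h))
                       (augopB (gen_right g) (gen_right h))
    end.

(* A (x)bar B is spanned by the elements a (x) b, 1 (x) b and a (x) 1 and all
   products are bilinear, so an axiom need only be checked on triples of
   spanning elements.  Write a spanning element as x (x) y with x in Abar and
   y in Bbar.  The defining formula (x (x) y) o (x' (x) y') = (x * x') (x) (y o y')
   extends bilinearly to every product in which one Bbar factor has no unit
   component, so on a triple with no two consecutive factors in A (x) 1 both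
   sides of an axiom become (x * x' * x'') (x) (one side of that axiom in Bbar).
   They agree because * is associative on Abar and Bbar satisfies the axioms
   whenever no two consecutive arguments are units.  Triples in (A (x) 1)^3
   reduce to the axioms of A.  On the remaining triples, where a factor b of B
   meets two units, either both sides vanish or the unit acts trivially on b
   in both and the Abar parts are the two sides of associativity of *.  The
   products exist by the universal property of the tensor product. *)

From HB Require Import structures.
From mathcomp Require Import all_boot all_order all_algebra.
From mathcomp Require Import ring.
From Stdlib Require Import ClassicalEpsilon.
Import GRing.Theory.
Set Implicit Arguments. Unset Strict Implicit.
Local Open Scope ring_scope.

Section LinearMaps.
Variable K : fieldType.
Implicit Types U V W X Y Z : lmodType K.

Lemma linear_map0 V W (f : V -> W) : linear f -> f 0 = 0.
Proof.
move=> Hf; have := Hf 1 0 0; rewrite scaler0 addr0 scale1r => /eqP.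
by rewrite -subr_eq subrr eq_sym => /eqP.
Qed.

Lemma linear_mapD V W (f : V -> W) : linear f -> forall x y, f (x + y) = f x + f y.
Proof. by move=> Hf x y; rewrite -[x in f (x + _)]scale1r Hf scale1r. Qed.

Lemma linear_mapZ V W (f : V -> W) : linear f -> forall k x, f (k *: x) = k *: f x.
Proof. by move=> Hf k x; rewrite -[k *: x]addr0 Hf (linear_map0 Hf) addr0. Qed.

Lemma linear_compose U V W (f : V -> W) (g : U -> V) :
  linear f -> linear g -> linear (fun x => f (g x)).
Proof. by move=> Hf Hg k x y; rewrite Hg Hf. Qed.

Lemma bilinear_map_linr U V W (f : U -> V -> W) : bilinear_map f -> forall u, linear (f u).
Proof. by case. Qed.

Lemma bilinear_map_linl U V W (f : U -> V -> W) : bilinear_map f -> forall v, linear (f^~ v).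
Proof. by case. Qed.

Section BilinearMaps.
Variables (U V W : lmodType K) (f : U -> V -> W).
Hypothesis Hf : bilinear_map f.

Lemma bilinear_mapDl x y z : f (x + y) z = f x z + f y z.
Proof. exact: linear_mapD (bilinear_map_linl Hf z) x y. Qed.
Lemma bilinear_mapDr x y z : f x (y + z) = f x y + f x z.
Proof. exact: linear_mapD (bilinear_map_linr Hf x) y z. Qed.
Lemma bilinear_mapZl k x z : f (k *: x) z = k *: f x z.
Proof. exact: linear_mapZ (bilinear_map_linl Hf z) k x. Qed.
Lemma bilinear_mapZr k x z : f x (k *: z) = k *: f x z.
Proof. exact: linear_mapZ (bilinear_map_linr Hf x) k z. Qed.
Lemma bilinear_map0l z : f 0 z = 0.
Proof. exact: linear_map0 (bilinear_map_linl Hf z). Qed.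
Lemma bilinear_map0r x : f x 0 = 0.
Proof. exact: linear_map0 (bilinear_map_linr Hf x). Qed.

Definition bilinearE := (bilinear_mapDl, bilinear_mapDr, bilinear_mapZl, bilinear_mapZr,
  bilinear_map0l, bilinear_map0r).
End BilinearMaps.

Definition trilinear_map U V W X (F : U -> V -> W -> X) : Prop :=
  [/\ forall y z, linear (fun x => F x y z), forall x z, linear (fun y => F x y z)
    & forall x y, linear (F x y)].

Lemma trilinear_comp_l U V W Y Z (f : U -> V -> Y) (g : Y -> W -> Z) :
  bilinear_map f -> bilinear_map g -> trilinear_map (fun x y z => g (f x y) z).
Proof.
move=> Hf Hg; split=> [y z|x z|x y].
- exact: linear_compose (bilinear_map_linl Hg z) (bilinear_map_linl Hf y).
- exact: linear_compose (bilinear_map_linl Hg z) (bilinear_map_linr Hf x).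
- exact: bilinear_map_linr Hg (f x y).
Qed.

Lemma trilinear_comp_r U V W Y Z (f : V -> W -> Y) (g : U -> Y -> Z) :
  bilinear_map f -> bilinear_map g -> trilinear_map (fun x y z => g x (f y z)).
Proof.
move=> Hf Hg; split=> [y z|x z|x y].
- exact: bilinear_map_linl Hg (f y z).
- exact: linear_compose (bilinear_map_linr Hg x) (bilinear_map_linl Hf z).
- exact: linear_compose (bilinear_map_linr Hg x) (bilinear_map_linr Hf y).
Qed.

Lemma pair_addE (U V : zmodType) (a c : U) (b d : V) : (a, b) + (c, d) = (a + c, b + d).
Proof. by []. Qed.

Lemma pair_scaleE U V k (a : U) (b : V) : k *: (a, b) = (k *: a, k *: b).
Proof. by []. Qed.
End LinearMaps.

Lemma addr_bring_here (V : zmodType) (a b r : V) : b = a -> b + r = a + r.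
Proof. by move->. Qed.
Lemma addr_bring_last (V : zmodType) (a b : V) : b = a -> b = a + 0.
Proof. by move->; rewrite addr0. Qed.
Lemma addr_bring_later (V : zmodType) (a b r r' : V) : r = a + r' -> b + r = a + (b + r').
Proof. by move->; rewrite addrCA. Qed.

(* [ac] proves an equation between two sums that agree up to the order of the
   summands, where summands [s *: v] and [s' *: v] are identified when [ring]
   proves [s = s']. *)
Ltac same_summand a b :=
  first [ unify a b; exact (erefl a)
        | lazymatch constr:((a, b)) with
          | (?s *: ?v, ?s' *: ?v') =>
              unify v v'; apply: (congr1 (fun z => z *: v)); ring
          end ].

Ltac bring_front a y :=
  match y with
  | (?b + ?r)%R =>
      let e := constr:(ltac:(same_summand a b) : b = a) in constr:(addr_bring_here r e)
  | (?b + ?r)%R => let p := bring_front a r in constr:(addr_bring_later b p)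
  | ?b => let e := constr:(ltac:(same_summand a b) : b = a) in constr:(addr_bring_last e)
  end.

Ltac ac_loop :=
  lazymatch goal with
  | |- (?a + _)%R = ?y =>
      let p := bring_front a y in
      apply: (eq_trans _ (esym p)); apply: (congr1 (fun z => a + z)); rewrite ?addr0; ac_loop
  | |- ?a = ?a => reflexivity
  | |- ?a = ?y =>
      let p := bring_front a y in apply: (eq_trans _ (esym p)); rewrite ?addr0; reflexivity
  end.

Ltac ac := rewrite -?addrA ?addr0 ?add0r; ac_loop.

Ltac lin_simpl := repeat progress rewrite ?(scalerDr, scalerA) ?(mul0r, mulr0, mul1r, mulr1)
  ?(scale0r, scaler0, scale1r) ?(add0r, addr0).

Section TensorLift.
Variables (K : fieldType) (A B T : lmodType K) (tens : A -> B -> T).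
Hypothesis tensP : is_tensor_product tens.

Lemma tens_bilinear : bilinear_map tens.
Proof. exact: tensP.1. Qed.

Lemma tensor_ext (W : lmodType K) (g1 g2 : T -> W) : linear g1 -> linear g2 ->
  (forall a b, g1 (tens a b) = g2 (tens a b)) -> g1 =1 g2.
Proof.
move=> Hg1 Hg2 E.
have Hf : bilinear_map (fun a b => g1 (tens a b)).
  by split=> u k x y; rewrite ?(bilinear_map_linr tens_bilinear)
                              ?(bilinear_map_linl tens_bilinear) Hg1.
have [g [_ g_uniq]] := tensP.2 W _ Hf.
have <- := g_uniq g1 (conj Hg1 (fun _ _ => erefl)).
by have <- := g_uniq g2 (conj Hg2 (fun a b => esym (E a b))).
Qed.

Definition tensor_lift (W : lmodType K) (f : A -> B -> W) : T -> W :=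
  epsilon (inhabits (fun _ => 0))
    (fun g => linear g /\ forall a b, g (tens a b) = f a b).

Lemma tensor_liftP (W : lmodType K) (f : A -> B -> W) : bilinear_map f ->
  linear (tensor_lift f) /\ forall a b, tensor_lift f (tens a b) = f a b.
Proof.
move=> Hf; apply: (epsilon_spec _ (fun g => linear g /\ forall a b, g (tens a b) = f a b)).
by have [g [Hg _]] := tensP.2 W f Hf; exists g.
Qed.

Lemma tensor_lift_linear (W : lmodType K) (f : A -> B -> W) :
  bilinear_map f -> linear (tensor_lift f).
Proof. by case/tensor_liftP. Qed.

Lemma tensor_lift_tens (W : lmodType K) (f : A -> B -> W) a b :
  bilinear_map f -> tensor_lift f (tens a b) = f a b.
Proof. by case/tensor_liftP. Qed.

Lemma tensor_lift_param (V W : lmodType K) (f : V -> A -> B -> W) :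
  (forall p, bilinear_map (f p)) -> (forall a b, linear (fun p => f p a b)) ->
  forall t, linear (fun p => tensor_lift (f p) t).
Proof.
move=> Hf Hp t k p q.
apply: (tensor_ext (g2 := fun t => k *: tensor_lift (f p) t + tensor_lift (f q) t)).
- exact: tensor_lift_linear.
- by move=> k' x y; rewrite !tensor_lift_linear // !scalerDr !scalerA; ac.
- by move=> a b; rewrite !tensor_lift_tens // Hp.
Qed.
End TensorLift.

Section TbarLift.
Variables (K : fieldType) (A B T : lmodType K) (tens : A -> B -> T).
Hypothesis tensP : is_tensor_product tens.
Local Notation tbar := (tbar A B T).
Local Notation gv := (gen_val tens).

Definition gen_linear (W : lmodType K) (phi : tgen A B -> W) : Prop :=
  [/\ bilinear_map (fun a b => phi (GenAB a b)),
      linear (fun b => phi (Gen1B b)) & linear (fun a => phi (GenA1 a))].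

Definition tbar_lift (W : lmodType K) (phi : tgen A B -> W) (x : tbar) : W :=
  tensor_lift tens (fun a b => phi (GenAB a b)) x.1.1 + phi (Gen1B x.1.2) + phi (GenA1 x.2).

Lemma tbar_lift_linear (W : lmodType K) (phi : tgen A B -> W) :
  gen_linear phi -> linear (tbar_lift phi).
Proof.
case=> HAB H1B HA1 k x y.
by rewrite /tbar_lift /= tensor_lift_linear // H1B HA1 !scalerDr; ac.
Qed.

Lemma tbar_lift_gen (W : lmodType K) (phi : tgen A B -> W) g :
  gen_linear phi -> tbar_lift phi (gv g) = phi g.
Proof.
case=> HAB H1B HA1; rewrite /tbar_lift.
case: g => [a b|b|a] /=;
  rewrite ?tensor_lift_tens ?(linear_map0 (tensor_lift_linear tensP HAB)) //.
- by rewrite (linear_map0 H1B) (linear_map0 HA1) !addr0.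
- by rewrite (linear_map0 HA1) add0r addr0.
- by rewrite (linear_map0 H1B) !add0r.
Qed.

Lemma tbar_lift_param (V W : lmodType K) (phi : V -> tgen A B -> W) :
  (forall p, gen_linear (phi p)) -> (forall g, linear (fun p => phi p g)) ->
  forall x, linear (fun p => tbar_lift (phi p) x).
Proof.
move=> Hphi Hp x k p q; rewrite /tbar_lift.
rewrite (tensor_lift_param tensP (f := fun p a b => phi p (GenAB a b))) //;
  last by move=> p'; case: (Hphi p').
by rewrite !Hp !scalerDr; ac.
Qed.

Lemma tbar_ext (W : lmodType K) (f1 f2 : tbar -> W) : linear f1 -> linear f2 ->
  (forall g, f1 (gv g) = f2 (gv g)) -> f1 =1 f2.
Proof.
move=> Hf1 Hf2 E [[t b] a].
have -> : ((t, b, a) : tbar) = (t, 0, 0) + gv (Gen1B b) + gv (GenA1 a).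
  by rewrite !pair_addE !addr0 !add0r.
rewrite !(linear_mapD Hf1) !(linear_mapD Hf2) !E; congr (_ + _ + _).
have tbarZ k (x y : T) : ((k *: x + y, 0, 0) : tbar) = k *: (x, 0, 0) + (y, 0, 0).
  by rewrite !pair_scaleE !pair_addE !scaler0 !addr0.
apply: (tensor_ext tensP (g1 := fun t => f1 (t, 0, 0)) (g2 := fun t => f2 (t, 0, 0))).
- by move=> k x y; rewrite tbarZ Hf1.
- by move=> k x y; rewrite tbarZ Hf2.
- by move=> a' b'; exact: (E (GenAB a' b')).
Qed.

Lemma tbar_ext3 (W : lmodType K) (F G : tbar -> tbar -> tbar -> W) :
  trilinear_map F -> trilinear_map G ->
  (forall g h k, F (gv g) (gv h) (gv k) = G (gv g) (gv h) (gv k)) ->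
  forall x y z, F x y z = G x y z.
Proof.
move=> [F1 F2 F3] [G1 G2 G3] E x y z.
apply: (tbar_ext (F3 x y) (G3 x y)) => k {z}.
apply: (tbar_ext (f1 := fun y => F x y (gv k)) (f2 := fun y => G x y (gv k))) => // h {y}.
exact: (tbar_ext (f1 := fun x => F x (gv h) (gv k)) (f2 := fun x => G x (gv h) (gv k))).
Qed.

Section Lift2.
Variables (W : lmodType K) (Phi : tgen A B -> tgen A B -> W).
Hypotheses (PhiL : forall h, gen_linear (Phi^~ h)) (PhiR : forall g, gen_linear (Phi g)).

Definition tbar_lift2 (x y : tbar) : W := tbar_lift (fun g => tbar_lift (Phi g) y) x.

Lemma tbar_lift2_inner y : gen_linear (fun g => tbar_lift (Phi g) y).
Proof.
split; first split.
- move=> a; apply: (tbar_lift_param (phi := fun b => Phi (GenAB a b))) => // h.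
  by case: (PhiL h) => /bilinear_map_linr.
- move=> b; apply: (tbar_lift_param (phi := fun a => Phi (GenAB a b))) => // h.
  by case: (PhiL h) => /bilinear_map_linl.
- by apply: (tbar_lift_param (phi := fun b => Phi (Gen1B b))) => // h; case: (PhiL h).
- by apply: (tbar_lift_param (phi := fun a => Phi (GenA1 a))) => // h; case: (PhiL h).
Qed.

Lemma tbar_lift2_bilinear : bilinear_map tbar_lift2.
Proof.
split=> [x|y]; last exact: tbar_lift_linear (tbar_lift2_inner y).
apply: (tbar_lift_param (phi := fun y g => tbar_lift (Phi g) y)) => [y|g].
- exact: tbar_lift2_inner.
- exact: tbar_lift_linear.
Qed.

Lemma tbar_lift2_gen g h : tbar_lift2 (gv g) (gv h) = Phi g h.
Proof. by rewrite /tbar_lift2 !tbar_lift_gen //; exact: tbar_lift2_inner. Qed.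
End Lift2.
End TbarLift.

Inductive tri_op := Prec | Dot | Succ | Star.

Definition tri_op_fun (V : zmodType) (p d s : V -> V -> V) (o : tri_op) : V -> V -> V :=
  match o with
  | Prec => p | Dot => d | Succ => s | Star => fun a b => p a b + d a b + s a b
  end.

(* [tri_axiom o1 o2 o3 o4] lists the seven axioms, in the shape
   [(x o2 y) o1 z = x o3 (y o4 z)]. *)
Inductive tri_axiom : tri_op -> tri_op -> tri_op -> tri_op -> Prop :=
  | TriPrecPrec : tri_axiom Prec Prec Prec Star
  | TriPrecSucc : tri_axiom Prec Succ Succ Prec
  | TriSuccStar : tri_axiom Succ Star Succ Succ
  | TriDotSucc : tri_axiom Dot Succ Succ Dot
  | TriDotPrec : tri_axiom Dot Prec Dot Succ
  | TriPrecDot : tri_axiom Prec Dot Dot Prec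
  | TriDotDot : tri_axiom Dot Dot Dot Dot.

Definition tri_law (V : zmodType) (p d s : V -> V -> V) o1 o2 o3 o4 : Prop :=
  forall a b c, tri_op_fun p d s o1 (tri_op_fun p d s o2 a b) c =
                tri_op_fun p d s o3 a (tri_op_fun p d s o4 b c).

(* Under the augmented conventions, [b o 1] is [b] if [unit_right o] and [0]
   otherwise; likewise [1 o b] with [unit_left o]. *)
Definition unit_right (o : tri_op) : bool :=
  match o with Prec | Star => true | Dot | Succ => false end.
Definition unit_left (o : tri_op) : bool :=
  match o with Succ | Star => true | Prec | Dot => false end.

Lemma tri_axiom_units o1 o2 o3 o4 : tri_axiom o1 o2 o3 o4 ->
  [/\ unit_right o1 && unit_right o2 = unit_right o3,
      unit_left o3 && unit_left o4 = unit_left o1,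
      unit_right o3 -> o4 = Star & unit_left o1 -> o2 = Star].
Proof. by case. Qed.

Lemma tridendriformP (K : fieldType) (V : lmodType K) (p d s : V -> V -> V) :
  tridendriform p d s <->
  [/\ bilinear_map p, bilinear_map d & bilinear_map s] /\
  forall o1 o2 o3 o4, tri_axiom o1 o2 o3 o4 -> tri_law p d s o1 o2 o3 o4.
Proof.
split=> [[Hbil laws]|[Hbil laws]]; split=> //.
  move=> o1 o2 o3 o4 ax a b c.
  by have [? [? [? [? [? [? ?]]]]]] := laws a b c; case: ax.
move=> a b c; do !split.
- exact: (laws _ _ _ _ TriPrecPrec).
- exact: (laws _ _ _ _ TriPrecSucc).
- exact: (laws _ _ _ _ TriSuccStar).
- exact: (laws _ _ _ _ TriDotSucc).
- exact: (laws _ _ _ _ TriDotPrec).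
- exact: (laws _ _ _ _ TriPrecDot).
- exact: (laws _ _ _ _ TriDotDot).
Qed.

Section TriOpsBilinear.
Variables (K : fieldType) (V : lmodType K) (p d s : V -> V -> V).
Hypotheses (Hp : bilinear_map p) (Hd : bilinear_map d) (Hs : bilinear_map s).

Lemma tri_op_fun_bilinear o : bilinear_map (tri_op_fun p d s o).
Proof.
case: o => //=; split=> u k x y;
  rewrite !(bilinearE Hp, bilinearE Hd, bilinearE Hs) !scalerDr; ac.
Qed.

Lemma tri_star_bilinear : bilinear_map (tri_star p d s).
Proof. exact: (tri_op_fun_bilinear Star). Qed.

Lemma tri_star_assoc : tridendriform p d s -> associative (tri_star p d s).
Proof.
case=> _ laws a b c; have [ax1 [ax2 [ax3 [ax4 [ax5 [ax6 ax7]]]]]] := laws a b c.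
rewrite /tri_star ax3 !(bilinearE Hp, bilinearE Hd, bilinearE Hs) ax1 ax6 ax2 ax5 ax7 ax4.
rewrite !(bilinearE Hp, bilinearE Hd, bilinearE Hs); ac.
Qed.
End TriOpsBilinear.

Section Augmentation.
Variables (K : fieldType) (V : lmodType K) (p d s : V -> V -> V).
Hypotheses (Hp : bilinear_map p) (Hd : bilinear_map d) (Hs : bilinear_map s).
Local Notation star := (tri_star p d s).
Local Notation opE := (bilinearE (tri_op_fun_bilinear Hp Hd Hs _)).

Lemma aug_star_pure a c : aug_star p d s (0, a) (0, c) = (0, star a c).
Proof. by rewrite /aug_star /= mul0r !scale0r !add0r. Qed.

Lemma aug_star_assoc : associative star -> associative (aug_star p d s).
Proof.
move=> star_assoc [l1 a1] [l2 a2] [l3 a3]; rewrite /aug_star /=; congr (_, _).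
  by rewrite mulrA.
move: (tri_star_bilinear Hp Hd Hs) star_assoc; generalize star => st Hst st_assoc.
by rewrite !(bilinearE Hst) st_assoc !scalerDr !scalerA; ac.
Qed.

Definition aug_op (o : tri_op) : aug V -> aug V -> aug V :=
  tri_op_fun (aug_prec p) (aug_dot d) (aug_succ s) o.

Lemma aug_opE o (y y' : aug V) : aug_op o y y' =
  (0, tri_op_fun p d s o y.2 y'.2 + (if unit_right o then y'.1 *: y.2 else 0)
                                 + (if unit_left o then y.1 *: y'.2 else 0)).
Proof.
case: o; rewrite /aug_op /aug_prec /aug_dot /aug_succ /= ?addr0 //.
by rewrite !pair_addE !addr0; congr (_, _); ac.
Qed.

Lemma aug_op_unitl o (y : aug V) : aug_op o (1, 0) y = (0, if unit_left o then y.2 else 0).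
Proof. by rewrite aug_opE /= opE scaler0 scale1r if_same !add0r. Qed.

Lemma aug_op_unitr o (y : aug V) : aug_op o y (1, 0) = (0, if unit_right o then y.2 else 0).
Proof. by rewrite aug_opE /= opE scaler0 scale1r if_same add0r addr0. Qed.

Lemma aug_tri_law o1 o2 o3 o4 : tri_axiom o1 o2 o3 o4 -> tri_law p d s o1 o2 o3 o4 ->
  forall y1 y2 y3 : aug V, y1.1 * y2.1 = 0 -> y2.1 * y3.1 = 0 ->
  aug_op o1 (aug_op o2 y1 y2) y3 = aug_op o3 y1 (aug_op o4 y2 y3).
Proof.
move=> ax law [l1 b1] [l2 b2] [l3 b3] /= l12 l23; rewrite !aug_opE /=; congr (_, _).
have l21 : l2 * l1 = 0 by rewrite mulrC.
have l32 : l3 * l2 = 0 by rewrite mulrC.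
have expandE := (bilinearE Hp, bilinearE Hd, bilinearE Hs, scalerDr, scalerA,
  l12, l23, l21, l32, scale0r, scaler0, add0r, addr0).
(* After expansion only [TriSuccStar] no longer shows its left-hand side, so it
   is used from right to left. *)
case: ax law => law; rewrite /tri_law /= in law *; rewrite ?expandE;
  first [rewrite law | rewrite -law]; rewrite ?expandE; ac.
Qed.
End Augmentation.

Section Generators.
Variables (K : fieldType) (A B T : lmodType K) (tens : A -> B -> T).
Hypothesis tensP : is_tensor_product tens.
Local Notation gv := (gen_val tens).
Local Notation tensE := (bilinearE (tens_bilinear tensP)).

Lemma emb_pure_r (x : aug A) (b : B) :
  emb tens x (0, b) = x.1 *: gv (Gen1B b) + gv (GenAB x.2 b).
Proof. by rewrite /emb /= !pair_scaleE !pair_addE !scaler0 scale0r !addr0 !add0r. Qed.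

Lemma embDr (x : aug A) (y y' : aug B) :
  emb tens x (y + y') = emb tens x y + emb tens x y'.
Proof. by rewrite /emb /= tensE scalerDr scalerDl. Qed.

Lemma emb0r (x : aug A) : emb tens x (0, 0) = 0.
Proof. by rewrite /emb /= tensE scaler0 scale0r. Qed.
End Generators.

Section GeneratorProduct.
Variables (K : fieldType) (A B T : lmodType K) (tens : A -> B -> T).
Hypothesis tensP : is_tensor_product tens.
Variables (precA dotA succA : A -> A -> A).
Hypotheses (HpA : bilinear_map precA) (HdA : bilinear_map dotA) (HsA : bilinear_map succA).
Local Notation emb := (emb tens).
Local Notation starA := (aug_star precA dotA succA).

Definition tbar_gen_op (opA : A -> A -> A) (augop : aug B -> aug B -> aug B)
    (g h : tgen A B) : tbar A B T :=
  match g, h with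
  | GenA1 a, GenA1 c => (0, 0, opA a c)
  | _, _ => emb (starA (gen_left g) (gen_left h)) (augop (gen_right g) (gen_right h))
  end.

Lemma tbar_gen_op_emb opA augop g h : (gen_right g).1 * (gen_right h).1 = 0 ->
  tbar_gen_op opA augop g h =
  emb (starA (gen_left g) (gen_left h)) (augop (gen_right g) (gen_right h)).
Proof. by case: g => [a b|b|a]; case: h => [c d|d|c] //= /eqP; rewrite mulr1 oner_eq0. Qed.

Lemma emb_starA_splitl (x z : aug A) (y : aug B) : emb (starA x z) y =
  x.1 *: emb (starA (1, 0) z) y + emb (starA (0, x.2) z) y.
Proof.
rewrite /emb /aug_star /= !pair_scaleE !pair_addE.
move: (tri_star_bilinear HpA HdA HsA); generalize (tri_star precA dotA succA) => st Hst.
rewrite !(bilinearE Hst) !(bilinearE (tens_bilinear tensP)); lin_simpl.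
by congr (_, _, _); ac.
Qed.

Lemma emb_starA_splitr (z x : aug A) (y : aug B) : emb (starA z x) y =
  x.1 *: emb (starA z (1, 0)) y + emb (starA z (0, x.2)) y.
Proof.
rewrite /emb /aug_star /= !pair_scaleE !pair_addE.
move: (tri_star_bilinear HpA HdA HsA); generalize (tri_star precA dotA succA) => st Hst.
rewrite !(bilinearE Hst) !(bilinearE (tens_bilinear tensP)); lin_simpl.
by congr (_, _, _); ac.
Qed.
End GeneratorProduct.

Section TbarOps.
Variables (K : fieldType) (A B T : lmodType K) (tens : A -> B -> T).
Hypothesis tensP : is_tensor_product tens.
Variables (precA dotA succA : A -> A -> A) (precB dotB succB : B -> B -> B).
Hypotheses (HA : tridendriform precA dotA succA) (HB : tridendriform precB dotB succB).
Local Notation tbar := (tbar A B T).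
Local Notation gv := (gen_val tens).
Local Notation emb := (emb tens).
Local Notation starA := (aug_star precA dotA succA).
Local Notation opA := (tri_op_fun precA dotA succA).
Local Notation augB := (aug_op precB dotB succB).
Local Notation gen_op o := (tbar_gen_op tens precA dotA succA (opA o) (augB o)).
Let HpA : bilinear_map precA. Proof. by case: HA => [[]]. Qed.
Let HdA : bilinear_map dotA. Proof. by case: HA => [[]]. Qed.
Let HsA : bilinear_map succA. Proof. by case: HA => [[]]. Qed.
Let HpB : bilinear_map precB. Proof. by case: HB => [[]]. Qed.
Let HdB : bilinear_map dotB. Proof. by case: HB => [[]]. Qed.
Let HsB : bilinear_map succB. Proof. by case: HB => [[]]. Qed.

Variables (precX dotX succX : tbar -> tbar -> tbar).
Hypotheses (HpX : bilinear_map precX) (HdX : bilinear_map dotX) (HsX : bilinear_map succX).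
Hypotheses (SpX : tbar_op_spec tens precA starA (aug_prec precB) precX)
  (SdX : tbar_op_spec tens dotA starA (aug_dot dotB) dotX)
  (SsX : tbar_op_spec tens succA starA (aug_succ succB) succX).
Local Notation opX := (tri_op_fun precX dotX succX).
Local Notation opXE := (bilinearE (tri_op_fun_bilinear HpX HdX HsX _)).

Lemma tbar_op_gen o g h : opX o (gv g) (gv h) = gen_op o g h.
Proof.
case: o; [exact: SpX | exact: SdX | exact: SsX |].
rewrite /= SpX SdX SsX; case: g => [a b|b|a]; case: h => [c d|d|c] => /=;
  by rewrite ?embDr // !pair_addE /= !addr0.
Qed.

Lemma tbar_op_A1 o a c : opX o (gv (GenA1 a)) (gv (GenA1 c)) = gv (GenA1 (opA o a c)).
Proof. exact: tbar_op_gen. Qed.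

Lemma tbar_op_gen_emb o g h : (gen_right g).1 * (gen_right h).1 = 0 ->
  opX o (gv g) (gv h) =
  emb (starA (gen_left g) (gen_left h)) (augB o (gen_right g) (gen_right h)).
Proof. by move=> gh; rewrite tbar_op_gen tbar_gen_op_emb. Qed.

Lemma tbar_op_emb_l o (x : aug A) (y : aug B) k : y.1 = 0 ->
  opX o (emb x y) (gv k) = emb (starA x (gen_left k)) (augB o y (gen_right k)).
Proof.
case: y => _ b /= ->; rewrite emb_pure_r !opXE !tbar_op_gen (emb_starA_splitl tensP HpA HdA HsA).
by case: k.
Qed.

Lemma tbar_op_emb_r o g (x : aug A) (y : aug B) : y.1 = 0 ->
  opX o (gv g) (emb x y) = emb (starA (gen_left g) x) (augB o (gen_right g) y).
Proof.
case: y => _ b /= ->; rewrite emb_pure_r !opXE !tbar_op_gen (emb_starA_splitr tensP HpA HdA HsA).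
by case: g.
Qed.

Section Laws.
Variables o1 o2 o3 o4 : tri_op.
Hypothesis ax : tri_axiom o1 o2 o3 o4.
Hypotheses (lawA : tri_law precA dotA succA o1 o2 o3 o4)
  (lawB : tri_law precB dotB succB o1 o2 o3 o4).
Let starA_assoc : associative starA.
Proof. exact: aug_star_assoc HpA HdA HsA (tri_star_assoc HpA HdA HsA HA). Qed.
Let augB_fst o y y' : (augB o y y').1 = 0.
Proof. by rewrite aug_opE. Qed.

Lemma tbar_law_generic g h k :
  (gen_right g).1 * (gen_right h).1 = 0 -> (gen_right h).1 * (gen_right k).1 = 0 ->
  opX o1 (opX o2 (gv g) (gv h)) (gv k) = opX o3 (gv g) (opX o4 (gv h) (gv k)).
Proof.
move=> gh hk.
rewrite !tbar_op_gen_emb // tbar_op_emb_l ?augB_fst // tbar_op_emb_r ?augB_fst //.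
by rewrite starA_assoc (aug_tri_law HpB HdB HsB ax lawB).
Qed.

Lemma tbar_law_AAA a c e :
  opX o1 (opX o2 (gv (GenA1 a)) (gv (GenA1 c))) (gv (GenA1 e)) =
  opX o3 (gv (GenA1 a)) (opX o4 (gv (GenA1 c)) (gv (GenA1 e))).
Proof. by rewrite !tbar_op_A1 lawA. Qed.

Lemma tbar_law_AAk a c k : (gen_right k).1 = 0 ->
  opX o1 (opX o2 (gv (GenA1 a)) (gv (GenA1 c))) (gv k) =
  opX o3 (gv (GenA1 a)) (opX o4 (gv (GenA1 c)) (gv k)).
Proof.
move=> k1; have A1k c' : (gen_right (GenA1 c')).1 * (gen_right k).1 = 0.
  by rewrite k1 mulr0.
rewrite tbar_op_A1 !tbar_op_gen_emb ?A1k // tbar_op_emb_r ?augB_fst //.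
rewrite !(aug_op_unitl HpB HdB HsB) /=.
have [_ ul34 _ ul_star] := tri_axiom_units ax.
have -> : (if unit_left o3 then if unit_left o4 then (gen_right k).2 else 0 else 0) =
          (if unit_left o1 then (gen_right k).2 else 0).
  by rewrite -ul34; case: (unit_left o3).
case: (boolP (unit_left o1)) => [/ul_star o2S | _]; last by rewrite !emb0r.
by rewrite o2S starA_assoc aug_star_pure.
Qed.

Lemma tbar_law_gAA g c e : (gen_right g).1 = 0 ->
  opX o1 (opX o2 (gv g) (gv (GenA1 c))) (gv (GenA1 e)) =
  opX o3 (gv g) (opX o4 (gv (GenA1 c)) (gv (GenA1 e))).
Proof.
move=> g1; have gA1 c' : (gen_right g).1 * (gen_right (GenA1 c')).1 = 0.
  by rewrite g1 mul0r.
rewrite tbar_op_A1 !tbar_op_gen_emb ?gA1 // tbar_op_emb_l ?augB_fst //.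
rewrite !(aug_op_unitr HpB HdB HsB) /=.
have [ur12 _ ur_star _] := tri_axiom_units ax.
have -> : (if unit_right o1 then if unit_right o2 then (gen_right g).2 else 0 else 0) =
          (if unit_right o3 then (gen_right g).2 else 0).
  by rewrite -ur12; case: (unit_right o1).
case: (boolP (unit_right o3)) => [/ur_star o4S | _]; last by rewrite !emb0r.
by rewrite o4S -starA_assoc aug_star_pure.
Qed.

Lemma tbar_law_gen g h k :
  opX o1 (opX o2 (gv g) (gv h)) (gv k) = opX o3 (gv g) (opX o4 (gv h) (gv k)).
Proof.
case: g => [a b|b|a]; case: h => [c d|d|c]; case: k => [e f|f|e];
  first [ exact: tbar_law_AAA
        | by apply: tbar_law_AAk
        | by apply: tbar_law_gAA
        | by apply: tbar_law_generic; rewrite /= ?mul0r ?mulr0 ].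
Qed.
End Laws.

Lemma tbar_tridendriform : tridendriform precX dotX succX.
Proof.
have /tridendriformP [_ lawsA] := HA; have /tridendriformP [_ lawsB] := HB.
apply/tridendriformP; split=> // o1 o2 o3 o4 ax.
have Hop := tri_op_fun_bilinear HpX HdX HsX.
apply: (tbar_ext3 tensP (trilinear_comp_l (Hop o2) (Hop o1)) (trilinear_comp_r (Hop o4) (Hop o3))).
exact: tbar_law_gen (lawsA _ _ _ _ ax) (lawsB _ _ _ _ ax).
Qed.
End TbarOps.

Section Existence.
Variables (K : fieldType) (A B T : lmodType K) (tens : A -> B -> T).
Hypothesis tensP : is_tensor_product tens.
Variables (precA dotA succA : A -> A -> A) (precB dotB succB : B -> B -> B).
Hypotheses (HpA : bilinear_map precA) (HdA : bilinear_map dotA) (HsA : bilinear_map succA).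
Hypotheses (HpB : bilinear_map precB) (HdB : bilinear_map dotB) (HsB : bilinear_map succB).
Variable o : tri_op.
Local Notation emb := (emb tens).
Local Notation starA := (aug_star precA dotA succA).
Local Notation opA := (tri_op_fun precA dotA succA o).
Local Notation augB := (aug_op precB dotB succB o).
Local Notation gen_op := (tbar_gen_op tens precA dotA succA opA augB).
Local Notation tensE := (bilinearE (tens_bilinear tensP)).

Lemma emb_starA_linear_l (z : aug A) (y : aug B) : linear (fun a => emb (starA (0, a) z) y).
Proof.
move=> k a a'; rewrite /emb /aug_star /= !pair_scaleE !pair_addE.
rewrite !(bilinearE (tri_star_bilinear HpA HdA HsA)) !tensE; lin_simpl.
by congr (_, _, _); ac.
Qed.

Lemma emb_starA_linear_r (z : aug A) (y : aug B) : linear (fun a => emb (starA z (0, a)) y).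
Proof.
move=> k a a'; rewrite /emb /aug_star /= !pair_scaleE !pair_addE.
rewrite !(bilinearE (tri_star_bilinear HpA HdA HsA)) !tensE; lin_simpl.
by congr (_, _, _); ac.
Qed.

Lemma emb_augB_linear_l (x : aug A) (w : aug B) : linear (fun b => emb x (augB (0, b) w)).
Proof.
move=> k b b'; rewrite !aug_opE /emb /= !pair_scaleE !pair_addE.
rewrite !(bilinearE (tri_op_fun_bilinear HpB HdB HsB o)) !tensE.
by case: (unit_right o) (unit_left o) => [] []; rewrite ?tensE; lin_simpl;
  congr (_, _, _); ac.
Qed.

Lemma emb_augB_linear_r (x : aug A) (w : aug B) : linear (fun b => emb x (augB w (0, b))).
Proof.
move=> k b b'; rewrite !aug_opE /emb /= !pair_scaleE !pair_addE.
rewrite !(bilinearE (tri_op_fun_bilinear HpB HdB HsB o)) !tensE.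
by case: (unit_right o) (unit_left o) => [] []; rewrite ?tensE; lin_simpl;
  congr (_, _, _); ac.
Qed.

Lemma tbar_A1_linear (f : A -> A) : linear f -> linear (fun a => (0, 0, f a) : tbar A B T).
Proof. by move=> Hf k a a'; rewrite !pair_scaleE !pair_addE Hf !scaler0 !addr0. Qed.

Lemma tbar_gen_op_linl h : gen_linear (fun g => gen_op g h).
Proof.
(split; first split) => [a|b||]; case: h => [c d|d|c].
all: try exact: (emb_augB_linear_l (starA _ (gen_left _)) (gen_right _)).
all: try exact: (emb_starA_linear_l (gen_left _) (augB (0, _) (gen_right _))).
all: try exact: (emb_starA_linear_l (gen_left _) (augB (1, 0) (gen_right _))).
exact: tbar_A1_linear (bilinear_map_linl (tri_op_fun_bilinear HpA HdA HsA o) c).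
Qed.

Lemma tbar_gen_op_linr g : gen_linear (gen_op g).
Proof.
(split; first split) => [c|d||]; case: g => [a b|b|a].
all: try exact: (emb_augB_linear_r (starA (gen_left _) _) (gen_right _)).
all: try exact: (emb_starA_linear_r (gen_left _) (augB (gen_right _) (0, _))).
all: try exact: (emb_starA_linear_r (gen_left _) (augB (gen_right _) (1, 0))).
exact: tbar_A1_linear (bilinear_map_linr (tri_op_fun_bilinear HpA HdA HsA o) a).
Qed.

Definition lift_op : tbar A B T -> tbar A B T -> tbar A B T := tbar_lift2 tens gen_op.

Lemma lift_op_bilinear : bilinear_map lift_op.
Proof. exact: (tbar_lift2_bilinear (Phi := gen_op) tensP tbar_gen_op_linl tbar_gen_op_linr). Qed.

Lemma lift_op_spec : tbar_op_spec tens opA starA augB lift_op.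
Proof. move=> g h; exact: (tbar_lift2_gen (Phi := gen_op) tensP tbar_gen_op_linl tbar_gen_op_linr). Qed.
End Existence.

Theorem mainTheorem3 (K : fieldType) (A B T : lmodType K)
  (precA dotA succA : A -> A -> A) (precB dotB succB : B -> B -> B)
  (tens : A -> B -> T) :
  tridendriform precA dotA succA ->
  tridendriform precB dotB succB ->
  is_tensor_product tens ->
  let starA := aug_star precA dotA succA in
  (exists precX dotX succX : tbar A B T -> tbar A B T -> tbar A B T,
     [/\ bilinear_map precX, bilinear_map dotX & bilinear_map succX] /\
     [/\ tbar_op_spec tens precA starA (aug_prec precB) precX,
         tbar_op_spec tens dotA starA (aug_dot dotB) dotX &
         tbar_op_spec tens succA starA (aug_succ succB) succX]) /\
  (forall precX dotX succX : tbar A B T -> tbar A B T -> tbar A B T,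
     [/\ bilinear_map precX, bilinear_map dotX & bilinear_map succX] ->
     [/\ tbar_op_spec tens precA starA (aug_prec precB) precX,
         tbar_op_spec tens dotA starA (aug_dot dotB) dotX &
         tbar_op_spec tens succA starA (aug_succ succB) succX] ->
     tridendriform precX dotX succX).
Proof.
move=> HA HB tensP starA; split.
- have [[HpA HdA HsA] _] := HA; have [[HpB HdB HsB] _] := HB.
  have opP := lift_op_bilinear tensP HpA HdA HsA HpB HdB HsB.
  have opS := lift_op_spec tensP HpA HdA HsA HpB HdB HsB.
  exists (lift_op tens precA dotA succA precB dotB succB Prec),
    (lift_op tens precA dotA succA precB dotB succB Dot),
    (lift_op tens precA dotA succA precB dotB succB Succ).
  by split; split; first [exact: opP | exact: opS].
- move=> precX dotX succX [HpX HdX HsX] [SpX SdX SsX].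
  exact: (tbar_tridendriform tensP HA HB HpX HdX HsX SpX SdX SsX).
Qed.
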